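(* Let $\mathcal C^*$ be as in the context and let $\ell$ be a positive integer with $|\mathcal C^*|\ge\ell$. Then there is a set $\mathbb T$ of neighborhood trees such that: (T1) $\ell\le|\mathcal V|\le\ell^2$ for every $(\mathcal V,E,r)\in\mathbb T$; (T2) $\bigcup_{(\mathcal V,E,r)\in\mathbb T}\mathcal V=\mathcal C^*$; (T3) for any two distinct trees $(\mathcal V,E,r),(\mathcal V',E',r')\in\mathbb T$, the sets $\mathcal V\setminus\{r\}$ and $\mathcal V'\setminus\{r'\}$ are disjoint.
   Context: $\mathcal C^*$ is the set of client representatives: given finite sets $\mathcal F,\mathcal C$, a metric $d$ on $\mathcal F\cup\mathcal C$, reals $x_{i,j}\ge0$ with $\sum_ix_{i,j}=1$, $d_{av}(j)=\sum_ix_{i,j}d(i,j)$, and a positive integer parameter $\ell_0$, start with $\mathcal C^*=\emptyset$, $R=\mathcal C$; while $R\ne\emptyset$, choose $v\in R$ with smallest $d_{av}(v)$, add it to $\mathcal C^*$, and remove from $R$ all $j$ with $d(j,v)\le2\ell_0d_{av}(j)$. A rooted tree $T=(\mathcal V,E,r)$ consists of a vertex set $\mathcal V\subseteq\mathcal C^*$, an edge set $E$ forming a tree on $\mathcal V$, and a root $r\in\mathcal V$. For $v\in\mathcal V$, $\Lambda_T(v)$ is the set of vertices of the subtree rooted at $v$, and for $v\ne r$, $\rho_T(v)$ is the parent of $v$. $T$ is a neighborhood tree if for every $v\in\mathcal V\setminus\{r\}$, $d(v,\mathcal C^*\setminus\Lambda_T(v))=d(v,\rho_T(v))$, where $d(v,\mathcal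 X)=\min_{w\in\mathcal X}d(v,w)$. *)

From HB Require Import structures.
From mathcomp Require Import all_boot all_order all_algebra.
Set Implicit Arguments. Unset Strict Implicit. Unset Printing Implicit Defensive.
Import Order.TTheory GRing.Theory Num.Theory.
Local Open Scope ring_scope.

Section Defs.
Variables (R : realFieldType) (T : finType).

Definition metric_on (S : {set T}) (d : T -> T -> R) : Prop :=
  (forall u v, u \in S -> v \in S -> 0 <= d u v) /\
  (forall u v, u \in S -> v \in S -> (d u v = 0 <-> u = v)) /\
  (forall u v, u \in S -> v \in S -> d u v = d v u) /\
  (forall u v w, u \in S -> v \in S -> w \in S -> d u w <= d u v + d v w).

Definition d_av (F : {set T}) (x d : T -> T -> R) (j : T) : R :=
  \sum_(i in F) x i j * d i j.

(* greedy_reps F x d l0 Rm S : the greedy procedure started with remaining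
   set Rm (and C* = empty) can output the set S (any tie-breaking). *)
Inductive greedy_reps (F : {set T}) (x d : T -> T -> R) (l0 : nat)
  : {set T} -> {set T} -> Prop :=
| greedy_done : greedy_reps F x d l0 set0 set0
| greedy_step (Rm S : {set T}) (v : T) :
    v \in Rm ->
    (forall u, u \in Rm -> d_av F x d v <= d_av F x d u) ->
    greedy_reps F x d l0
      (Rm :\: [set j in Rm | d j v <= 2%:R * l0%:R * d_av F x d j]) S ->
    greedy_reps F x d l0 Rm (v |: S).

(* A rooted tree (V, E, r): E is a set of 2-element subsets of V. *)
Definition rtree := ({set T} * {set {set T}} * T)%type.
Definition rt_V (t : rtree) : {set T} := t.1.1.
Definition rt_E (t : rtree) : {set {set T}} := t.1.2.
Definition rt_r (t : rtree) : T := t.2.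

Definition adj_in (E : {set {set T}}) (S : {set T}) : rel T :=
  [rel u w | [&& u \in S, w \in S & [set u; w] \in E]].

Definition is_tree_on (V : {set T}) (E : {set {set T}}) : Prop :=
  V != set0 /\
  (forall e, e \in E -> (#|e| == 2)%N && (e \subset V)) /\
  (forall u w, u \in V -> w \in V -> connect (adj_in E V) u w) /\
  #|E| = (#|V| - 1)%N.

Definition is_rooted_tree (Cs : {set T}) (t : rtree) : Prop :=
  rt_V t \subset Cs /\ is_tree_on (rt_V t) (rt_E t) /\ rt_r t \in rt_V t.

(* Lambda_T(v): vertices of the subtree rooted at v, i.e. the vertices w
   whose path to the root passes through v. *)
Definition subtree (t : rtree) (v : T) : {set T} :=
  if v == rt_r t then rt_V t
  else [set w in rt_V t | ~~ connect (adj_in (rt_E t) (rt_V t :\ v)) w (rt_r t)].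

Definition is_parent (t : rtree) (v p : T) : Prop :=
  [&& p \in rt_V t, [set v; p] \in rt_E t & p \notin subtree t v].

(* d(v, X) = d(v, p) with p in X, written out: p in X and d(v,p) <= d(v,w) for w in X *)
Definition dist_set_eq (d : T -> T -> R) (v : T) (X : {set T}) (a : R) : Prop :=
  (exists2 w, w \in X & d v w = a) /\ (forall w, w \in X -> a <= d v w).

Definition neighborhood_tree (Cs : {set T}) (d : T -> T -> R) (t : rtree) : Prop :=
  is_rooted_tree Cs t /\
  forall v, v \in rt_V t -> v != rt_r t ->
    exists p, is_parent t v p /\ dist_set_eq d v (Cs :\: subtree t v) (d v p).

End Defs.

(* Only #|C*| >= l matters. Grow nearest-neighbour chains on C*: from an
   uncovered point, repeatedly step to the nearest point not yet on the chain,
   and stop when the step lands on an already covered point or the chain has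
   l-1 points (the landing point then becomes a new root). Linking every chain
   point to the next one yields a forest whose blocks (the chains) have at most
   l-1 points, in which every root has a child block of exactly l-1 points, and
   in which every point strictly nearer to v than v's parent lies below v in
   v's block. Any subtree containing, with each non-root vertex, the part of its
   block below it is therefore a neighborhood tree. Such subtrees are cut off
   bottom-up: at a deepest vertex z whose child blocks carry at least l-1
   descendants, each child block carries at most (l-1)^2 of them, so they can be
   grouped into parts of total size in [l-1, (l-1)^2 + 2(l-1)), and each part
   together with z spans a tree with between l and l^2 vertices. *)

From HB Require Import structures.
From mathcomp Require Import all_boot all_order all_algebra.
From mathcomp Require Import zify.
Set Implicit Arguments. Unset Strict Implicit. Unset Printing Implicit Defensive.
Import Order.TTheory GRing.Theory Num.Theory.

Section Ancestry.
Variables (T : finType) (par : T -> T).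

Lemma fconnect_iterP x y : reflect (exists n, iter n par x = y) (fconnect par x y).
Proof.
apply: (iffP idP) => [/iter_findex <-|[n <-]]; first by eexists.
exact: fconnect_iter.
Qed.

Lemma fconnect_par x y : fconnect par x y -> x != y -> fconnect par (par x) y.
Proof.
case/fconnect_iterP=> [[|n] <-]; first by rewrite eqxx.
by move=> _; apply/fconnect_iterP; exists n; rewrite iterSr.
Qed.

Lemma fconnect_fixed k x : par k = k -> fconnect par k x -> x = k.
Proof. by move=> pk /fconnect_iterP [n <-]; elim: n => //= n ->. Qed.

Lemma fconnect_total u a b : fconnect par u a -> fconnect par u b ->
  fconnect par a b \/ fconnect par b a.
Proof.
move=> /fconnect_iterP [n <-] /fconnect_iterP [m <-].
have [nm|/ltnW mn] := leqP n m; [left|right]; apply/fconnect_iterP.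
  by exists (m - n); rewrite -iterD subnK.
by exists (n - m); rewrite -iterD subnK.
Qed.

Variable h : T -> nat.
Hypothesis par_rank : forall x, par x != x -> h (par x) < h x.

Lemma rank_fconnect x y : fconnect par x y -> h y <= h x.
Proof.
case/fconnect_iterP=> n <-; elim: n => //= n IH.
have [->//|/par_rank lt] := eqVneq (par (iter n par x)) (iter n par x).
exact: leq_trans (ltnW lt) IH.
Qed.

Lemma rank_fconnect_lt x y : fconnect par x y -> x != y -> h y < h x.
Proof.
move=> xy nxy; have px : par x != x.
  by apply: contra_neq nxy => px; rewrite (fconnect_fixed px xy).
exact: leq_ltn_trans (rank_fconnect (fconnect_par xy nxy)) (par_rank px).
Qed.

Lemma fconnect_closed_in (S : {set T}) x y :
  {in S, forall v, par v \in S} -> x \in S -> fconnect par x y -> y \in S.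
Proof.
by move=> Spar xS /fconnect_iterP [n <-]; elim: n => //= n IH; apply: Spar.
Qed.

Lemma exists_fixed_in (S : {set T}) x :
  {in S, forall v, par v \in S} -> x \in S -> exists2 k, k \in S & par k = k.
Proof.
move=> Spar; elim: {x}(h x).+1 {-2}x (ltnSn (h x)) => // n IH x hx xS.
have [px|px] := eqVneq (par x) x; first by exists x.
by apply: (IH (par x)) (Spar _ xS); have := par_rank px; lia.
Qed.

End Ancestry.

Lemma set2_eq (T : finType) (x y a b : T) :
  [set x; y] = [set a; b] -> (x = a /\ y = b) \/ (x = b /\ y = a).
Proof.
move=> E.
have: x \in [set a; b] by rewrite -E set21.
have: y \in [set a; b] by rewrite -E set22.
have: a \in [set x; y] by rewrite E set21.
have: b \in [set x; y] by rewrite E set22.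
by move=> /set2P [] -> /set2P [] -> /set2P [] E3 /set2P [] E4; subst; auto.
Qed.

Section ParentTree.
Variables (T : finType) (par : T -> T) (h : T -> nat) (V : {set T}) (r : T).
Hypothesis par_rank : forall x, par x != x -> h (par x) < h x.
Hypothesis rV : r \in V.
Hypothesis parV : forall v, v \in V -> v != r -> par v \in V.
Hypothesis parN : forall v, v \in V -> v != r -> par v != v.

Definition parent_edges : {set {set T}} := [set [set v; par v] | v in V :\ r].
Definition parent_tree : rtree T := (V, parent_edges, r).

Lemma fconnect_root v : v \in V -> fconnect par v r.
Proof.
elim: {v}(h v).+1 {-2}v (ltnSn (h v)) => // n IH v hv vV.
have [->|vr] := eqVneq v r; first exact: connect0.
apply: connect_trans (fconnect1 par v) (IH _ _ (parV vV vr)).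
by have := par_rank (parN vV vr); lia.
Qed.

Lemma rank_root_lt v : v \in V -> v != r -> h r < h v.
Proof. by move=> vV; apply: (rank_fconnect_lt par_rank (fconnect_root vV)). Qed.

Lemma connect_to_root (S : {set T}) u : r \in S -> u \in V ->
  {in V, forall x, fconnect par u x -> x \in S} ->
  connect (adj_in parent_edges S) u r.
Proof.
move=> rS; elim: {u}(h u).+1 {-2}u (ltnSn (h u)) => // n IH u hu uV uS.
have [->|ur] := eqVneq u r; first exact: connect0.
have pV := parV uV ur; have pN := parN uV ur.
apply: connect_trans (connect1 _) (IH _ _ pV _).
- rewrite /adj_in /= (uS u uV (connect0 _ _)) (uS _ pV (fconnect1 _ _)) /=.
  by apply/imsetP; exists u => //; rewrite in_setD1 ur.
- by have := par_rank pN; lia.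
- by move=> x xV px; apply: uS => //; apply: connect_trans (fconnect1 par u) px.
Qed.

Lemma adj_in_sym (E : {set {set T}}) (S : {set T}) : symmetric (adj_in E S).
Proof. by move=> x y; rewrite /adj_in /= setUC andbCA. Qed.

Lemma parent_tree_is_tree : is_tree_on V parent_edges.
Proof.
split; first by apply/set0Pn; exists r.
split.
  move=> e /imsetP [u]; rewrite in_setD1 => /andP [ur uV] ->.
  rewrite cards2 [u == _]eq_sym parN //=; apply/subsetP => x /set2P [] ->//.
  exact: parV.
split.
  have toV u : u \in V -> connect (adj_in parent_edges V) u r.
    by move=> uV; apply: connect_to_root.
  move=> u w uV wV; apply: connect_trans (toV u uV) _.
  by rewrite (sym_connect_sym (@adj_in_sym _ V)); apply: toV.
rewrite card_in_imset; first by rewrite (cardsD1 r V) rV add1n subn1.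
move=> u w; rewrite !in_setD1 => /andP [ur uV] /andP [wr wV] /set2_eq [[]//|[uw wu]].
have := par_rank (parN uV ur); have := par_rank (parN wV wr).
by rewrite -uw -wu; lia.
Qed.

Lemma mem_subtree v w : v \in V -> v != r -> w \in V -> fconnect par w v ->
  w \in subtree parent_tree v.
Proof.
move=> vV vr wV wv; rewrite /subtree /= (negbTE vr) inE wV /=.
apply/negP => wr.
have cl : closed (adj_in parent_edges (V :\ v)) [pred x | fconnect par x v].
  move=> x y /and3P [+ + /imsetP [u _ /set2_eq E]].
  rewrite !in_setD1 /= => /andP [xv _] /andP [yv _].
  have up (a : T) : fconnect par (par a) v -> fconnect par a v.
    exact: connect_trans (fconnect1 par a).
  by case: E => -[? ?]; subst x y; rewrite !inE; apply/idP/idP => H; auto;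
    apply: fconnect_par.
have := closed_connect cl wr; rewrite !inE /= wv => /esym rv.
by have := rank_fconnect par_rank rv; have := rank_root_lt vV vr; lia.
Qed.

Lemma par_notin_subtree v : v \in V -> v != r -> par v \notin subtree parent_tree v.
Proof.
move=> vV vr; rewrite /subtree /= (negbTE vr) inE negb_and negbK; apply/orP; right.
apply: connect_to_root; first by rewrite in_setD1 eq_sym vr rV.
  exact: parV.
move=> x xV px; rewrite in_setD1 xV andbT; apply: contraTneq px => ->.
apply/negP => vpv; have := rank_fconnect par_rank vpv.
by have := par_rank (parN vV vr); lia.
Qed.

Lemma is_parent_par v : v \in V -> v != r -> is_parent parent_tree v (par v).
Proof.
move=> vV vr; rewrite /is_parent /= parV //= par_notin_subtree // andbT.
by apply/imsetP; exists v => //; rewrite in_setD1 vr.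
Qed.

End ParentTree.

Section Pieces.
Variables (R : realFieldType) (T : finType) (Cs : {set T}) (d : T -> T -> R).
Variables (par blk : T -> T) (h : T -> nat).
Hypothesis par_rank : forall x, par x != x -> h (par x) < h x.
Hypothesis nearer_below : {in Cs, forall v, par v != v -> {in Cs, forall y,
  (d v y < d v (par v))%R -> blk y = blk v /\ fconnect par y v}}.

Definition admissible_piece (z : T) (V : {set T}) : Prop :=
  [/\ z \in V, V \subset Cs,
      {in V, forall v, v != z -> par v \in V /\ par v != v} &
      {in V, forall v, v != z ->
         {in Cs, forall w, blk w = blk v -> fconnect par w v -> w \in V}}].

Lemma admissible_neighborhood_tree z V :
  admissible_piece z V -> neighborhood_tree Cs d (parent_tree par V z).
Proof.
case=> zV VCs Vpar Vblk.
have parV v : v \in V -> v != z -> par v \in V by move=> vV /(Vpar v vV) [].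
have parN v : v \in V -> v != z -> par v != v by move=> vV /(Vpar v vV) [].
split; first by split=> //; split=> //; exact: (parent_tree_is_tree par_rank zV parV parN).
move=> v /= vV vz; exists (par v); split; first exact: (is_parent_par par_rank zV parV parN).
split.
  exists (par v) => //; rewrite in_setD (par_notin_subtree par_rank zV parV parN) //=.
  exact: (subsetP VCs) (parV _ vV vz).
move=> w; rewrite in_setD => /andP [w_out wCs]; rewrite leNgt; apply/negP => lt.
have [bw wv] := nearer_below (subsetP VCs _ vV) (parN _ vV vz) wCs lt.
have wV := Vblk v vV vz w wCs bw wv.
by rewrite (mem_subtree par_rank zV parV parN) in w_out.
Qed.

Definition piece_cover (l : nat) (Pcs : {set T * {set T}}) : Prop :=
  [/\ {in Pcs, forall p, admissible_piece p.1 p.2 /\ l <= #|p.2| <= l ^ 2},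
      {in Cs, forall x, exists2 p, p \in Pcs & x \in p.2} &
      {in Pcs &, forall p p', p != p' -> [disjoint p.2 :\ p.1 & p'.2 :\ p'.1]}].

Lemma neighborhood_trees_of_pieces l Pcs : piece_cover l Pcs ->
  exists TT : {set rtree T},
    (forall t, t \in TT -> neighborhood_tree Cs d t) /\
    (forall t, t \in TT -> (l <= #|rt_V t| <= l ^ 2)%N) /\
    \bigcup_(t in TT) rt_V t = Cs /\
    (forall t t', t \in TT -> t' \in TT -> t != t' ->
       [disjoint (rt_V t :\ rt_r t) & (rt_V t' :\ rt_r t')]).
Proof.
case=> Pgood Pcover Pdisj; exists [set parent_tree par p.2 p.1 | p in Pcs].
split; first by move=> _ /imsetP [p /Pgood [pa _] ->]; apply: admissible_neighborhood_tree.
split; first by move=> _ /imsetP [p /Pgood [_ pl] ->].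
split.
  apply/setP => x; apply/bigcupP/idP => [[_ /imsetP [p /Pgood [[_ sub _ _] _] ->]]|].
    exact: (subsetP sub).
  by case/Pcover=> p pP xp; exists (parent_tree par p.2 p.1); first exact: imset_f.
move=> _ _ /imsetP [p pP ->] /imsetP [p' p'P ->] ne.
by apply: Pdisj => //; apply: contraNneq ne => ->.
Qed.

End Pieces.

Section Cards.
Variables (I T : finType).

Lemma card_bigcup_le (G : {set I}) (F : I -> {set T}) :
  #|\bigcup_(i in G) F i| <= \sum_(i in G) #|F i|.
Proof.
elim/big_rec2: _ => [|i n U _ le]; first by rewrite cards0.
by rewrite (leq_trans (leq_card_setU (F i) U)) ?leq_add2l.
Qed.

Lemma card_bigcup_disjoint (G : {set I}) (F : I -> {set T}) :
  {in G &, forall i j, i != j -> [disjoint F i & F j]} ->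
  #|\bigcup_(i in G) F i| = \sum_(i in G) #|F i|.
Proof.
elim: {G}_.+1 {-2}G (ltnSn #|G|) => // n IH G leG disF.
have [->|[i iG]] := set_0Vmem G; first by rewrite !big_set0 cards0.
rewrite (big_setD1 i iG) (big_setD1 i iG) /= -IH; first last.
- by move=> j j' /setD1P [_ jG] /setD1P [_ j'G]; apply: disF.
- by move: leG; rewrite (cardsD1 i G) iG.
apply/eqP; rewrite (leq_card_setU _ _).2; apply: bigcup_disjoint => j /setD1P [ji jG].
by apply: disF; rewrite // eq_sym.
Qed.

End Cards.

Section WeightPartition.
Variables (T : finType) (c : T -> nat) (L M : nat).
Hypothesis L_gt0 : 0 < L.

Lemma exists_subset_weight (A : {set T}) : {in A, forall a, c a <= M} ->
  L <= \sum_(a in A) c a ->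
  exists2 G : {set T}, G \subset A & L <= \sum_(a in G) c a < L + M.
Proof.
elim: {A}_.+1 {-2}A (ltnSn #|A|) => // n IH A leA cM LA.
have [small|big] := ltnP (\sum_(a in A) c a) (L + M); first by exists A; rewrite ?LA.
have [a aA] : exists a, a \in A.
  by apply/set0Pn; apply: contraTneq LA => ->; rewrite big_set0 -ltnNge.
have [|||G GA GL] := IH (A :\ a).
- by move: leA; rewrite (cardsD1 a A) aA.
- by move=> b /setD1P [_ /cM].
- by move: big; rewrite (big_setD1 a aA) /=; have := cM a aA; lia.
by exists G => //; apply: subset_trans GA (subD1set _ _).
Qed.

Lemma exists_partition_weight (A : {set T}) : {in A, forall a, c a <= M} ->
  L <= \sum_(a in A) c a ->
  exists2 P : {set {set T}}, partition P A &
    {in P, forall G : {set T}, L <= \sum_(a in G) c a < M + 2 * L}.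
Proof.
elim: {A}_.+1 {-2}A (ltnSn #|A|) => // n IH A leA cM LA.
have A_neq0 : A != set0 by apply: contraTneq LA => ->; rewrite big_set0 -ltnNge.
have [small|big] := ltnP (\sum_(a in A) c a) (M + 2 * L).
  exists [set A]; last by move=> G /set1P ->; rewrite LA small.
  by rewrite /partition cover1 trivIset1 eqxx inE eq_sym A_neq0.
have [G GA /andP [LG GM]] := exists_subset_weight cM LA.
have G_neq0 : G != set0 by apply: contraTneq LG => ->; rewrite big_set0 -ltnNge.
have sumA : \sum_(a in A) c a = \sum_(a in G) c a + \sum_(a in A :\: G) c a.
  by rewrite (big_setID G) /= (setIidPr GA).
have [|||P PA PL] := IH (A :\: G).
- rewrite (cardsD A G) (setIidPr GA); have := card_gt0 G; rewrite G_neq0.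
  by have := subset_leq_card GA; lia.
- by move=> b /setDP [/cM].
- by move: big; rewrite sumA; lia.
exists (G |: P); last by move=> H /setU1P [->|/PL //]; rewrite LG; lia.
rewrite -(setID A G) (setIidPr GA); apply: partitionU1 => //.
by rewrite disjoints_subset; apply/subsetP => x xG; rewrite !inE xG.
Qed.

End WeightPartition.

Lemma nth_rcons_le (T : Type) (x0 x : T) s i :
  i <= size s -> nth x0 (rcons s x) i = nth x s i.
Proof.
rewrite nth_rcons leq_eqVlt => /orP [/eqP ->|lt]; first by rewrite ltnn eqxx nth_default.
by rewrite lt; apply: set_nth_default.
Qed.

Section Chains.
Variables (R : realFieldType) (T : finType) (Cs : {set T}) (d : T -> T -> R) (k : nat).

(* The end point [z] follows the last point of [s], as [nth z s (size s) = z]. *)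
Definition nn_chain (s : seq T) (z : T) : Prop :=
  forall m, m < size s -> {in Cs, forall w,
    (d (nth z s m) w < d (nth z s m) (nth z s m.+1))%R -> exists2 j, j <= m & w = nth z s j}.

Lemma nn_chain_rcons s z z' : nn_chain s z ->
  {in Cs :\: [set x in rcons s z], forall u, (d z z' <= d z u)%R} ->
  nn_chain (rcons s z) z'.
Proof.
move=> nn_s z'_min m; rewrite size_rcons ltnS leq_eqVlt => /orP [/eqP ->|ms] w wCs.
  rewrite nth_rcons ltnn eqxx nth_default ?size_rcons // => lt.
  have w_in : w \in rcons s z.
    apply: contraTT lt => w_out; rewrite -leNgt; apply: z'_min.
    by rewrite !inE w_out.
  exists (index w (rcons s z)); last by rewrite nth_index.
  by rewrite -ltnS -(size_rcons s z) index_mem.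
rewrite !nth_rcons_le ?(ltnW ms) // => /(nn_s m ms w wCs) [j jm ->].
by exists j => //; rewrite nth_rcons_le // (leq_trans jm (ltnW ms)).
Qed.

Variable Cov : {set T}.

Record attachable_chain (s : seq T) (z : T) : Prop := AttachableChain {
  ac_uniq : uniq s;
  ac_size : 0 < size s <= k;
  ac_new : {subset s <= Cs :\: Cov};
  ac_end : z \in Cs;
  ac_end_notin : z \notin s;
  ac_nn : nn_chain s z;
  ac_stop : z \in Cov \/ size s = k }.

Lemma exists_attachable_chain y : y \in Cs -> y \notin Cov -> 0 < k -> k < #|Cs| ->
  exists s z, attachable_chain s z.
Proof.
move=> yCs yCov k_gt0 kCs.
suff grow : forall n s z, k - size s < n -> uniq (rcons s z) ->
    {subset rcons s z <= Cs :\: Cov} -> size s < k -> nn_chain s z ->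
    exists s z, attachable_chain s z.
  by apply: (grow _ [::] y (ltnSn _)) => // x; rewrite inE => /eqP ->; rewrite !inE yCov.
elim=> // n IH s z kn s_uniq s_new s_k nn_s.
set A := Cs :\: [set x in rcons s z].
have [a aA] : exists a, a \in A.
  apply/set0Pn; apply: contraTneq kCs => A0; rewrite -leqNgt.
  have /subset_leq_card : Cs \subset [set x in rcons s z].
    apply/subsetP => x xCs; apply: contraT => xs.
    by rewrite -(in_set0 x) -A0 in_setD xs.
  by rewrite cardsE (card_uniqP s_uniq) size_rcons => /leq_trans; apply.
case: (@arg_minP _ _ _ a (fun u => u \in A) (d z)) => //= z' z'A z'_min.
have [z's z'Cs] : z' \notin rcons s z /\ z' \in Cs by move: z'A; rewrite !inE => /andP [].
have nn_s' := nn_chain_rcons nn_s z'_min.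
have [stop|] := boolP ((z' \in Cov) || (size (rcons s z) == k)).
  exists (rcons s z), z'; split => //.
  - by rewrite size_rcons.
  - by case/orP: stop => [->|/eqP ->]; [left|right].
rewrite negb_or => /andP [z'Cov sk].
apply: (IH (rcons s z) z').
- by rewrite size_rcons; lia.
- by rewrite rcons_uniq z's s_uniq.
- by move=> x; rewrite mem_rcons inE => /orP [/eqP ->|/s_new //]; rewrite !inE z'Cov.
- by move: sk; rewrite size_rcons; lia.
- exact: nn_s'.
Qed.

End Chains.

Section BlockForest.
Variables (R : realFieldType) (T : finType) (Cs : {set T}) (d : T -> T -> R) (k : nat).

Definition block (blk : T -> T) (a : T) : {set T} := [set w in Cs | blk w == a].

(* [Cov] is the set of points covered so far, [par] a parent map whose roots are
   its fixed points, [h] a rank decreasing towards the roots, and [blk v] the top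
   of the block (chain) through [v]. *)
Record block_forest (Cov : {set T}) (par blk : T -> T) (h : T -> nat) : Prop :=
  BlockForest {
  bf_sub : Cov \subset Cs;
  bf_out : forall v, v \notin Cov -> par v = v /\ blk v = v;
  bf_par : {in Cov, forall v, par v \in Cov};
  bf_rank : forall x, par x != x -> h (par x) < h x;
  bf_anc : {in Cov, forall v, fconnect par v (blk v)};
  bf_blk_par : {in Cov, forall v, v != blk v -> blk (par v) = blk v};
  bf_top : {in Cov, forall v, par v != v -> par (blk v) != blk v};
  bf_block_size : forall a, #|block blk a| <= k;
  bf_root_block : {in Cov, forall r, par r = r -> exists a,
    [/\ a \in Cov, par a = r, a != r, blk a = a & k <= #|block blk a|]};
  bf_nearer : {in Cov, forall v, par v != v -> {in Cs, forall y,
    (d v y < d v (par v))%R -> blk y = blk v /\ fconnect par y v}} }.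

Lemma bf_blk Cov par blk h : block_forest Cov par blk h ->
  {in Cov, forall v, blk v \in Cov}.
Proof. by move=> bf v vC; apply: fconnect_closed_in (bf_par bf) vC (bf_anc bf vC). Qed.

Section Extend.
Variables (Cov : {set T}) (par blk : T -> T) (h : T -> nat) (s : seq T) (z : T).
Hypothesis forest : block_forest Cov par blk h.
Hypothesis chain : attachable_chain Cs d k Cov s z.

Definition chain_par v := if v \in s then nth z s (index v s).+1 else par v.
Definition chain_blk v := if v \in s then last z s else blk v.
Definition chain_rank v := if v \in s then h z + (size s - index v s) else h v.
Definition chain_cov := Cov :|: [set x | (x \in s) || (x == z)].

Let s_uniq := ac_uniq chain.
Let z_notin_s := ac_end_notin chain.
Let s_gt0 : 0 < size s. Proof. by case/andP: (ac_size chain). Qed.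

Lemma chain_new_in x : x \in s -> x \in Cs /\ x \notin Cov.
Proof. by move/(ac_new chain); rewrite !inE => /andP []. Qed.

Lemma cov_notin_chain x : x \in Cov -> x \notin s.
Proof. by apply: contraTN => /chain_new_in []. Qed.

Lemma notin_chain v : v \notin s ->
  [/\ chain_par v = par v, chain_blk v = blk v & chain_rank v = h v].
Proof. by move=> vs; rewrite /chain_par /chain_blk /chain_rank (negbTE vs). Qed.

Lemma last_chain_in : last z s \in s.
Proof. by rewrite -nth_last mem_nth // prednK. Qed.

Lemma chain_par_nth i : i < size s -> chain_par (nth z s i) = nth z s i.+1.
Proof. by move=> lt; rewrite /chain_par mem_nth // index_uniq. Qed.

Lemma chain_par_last : chain_par (last z s) = z.
Proof. by rewrite -nth_last chain_par_nth ?prednK ?nth_default // ltn_predL. Qed.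

Lemma chain_par_neq v : v \in s -> chain_par v != v.
Proof.
move=> vs; rewrite -(nth_index z vs) chain_par_nth ?index_mem //.
have [lt|ge] := ltnP (index v s).+1 (size s).
  by rewrite nth_uniq ?index_mem // eqn_leq ltnn.
by rewrite nth_default //; apply: contraNneq z_notin_s => ->; apply: mem_nth; rewrite index_mem.
Qed.

Lemma iter_chain_par i n : i + n <= size s ->
  iter n chain_par (nth z s i) = nth z s (i + n).
Proof.
elim: n => [|n IH] lt; first by rewrite addn0.
have lt' : i + n < size s by rewrite -addnS.
by rewrite iterS IH ?chain_par_nth ?addnS // ltnW.
Qed.

Lemma fconnect_chain i j : i <= j -> j <= size s ->
  fconnect chain_par (nth z s i) (nth z s j).
Proof.
move=> ij js; apply/fconnect_iterP; exists (j - i).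
by rewrite iter_chain_par subnKC.
Qed.

Lemma fconnect_chain_old x y : x \in Cov -> fconnect par x y -> fconnect chain_par x y.
Proof.
move=> xC /fconnect_iterP [n <-]; apply/fconnect_iterP; exists n.
elim: n => //= n ->.
have inC : iter n par x \in Cov.
  exact: fconnect_closed_in (bf_par forest) xC (fconnect_iter _ _ _).
by have [-> _ _] := notin_chain (cov_notin_chain inC).
Qed.

Lemma chain_covP v : v \in chain_cov -> [\/ v \in s, v \in Cov | v = z /\ z \notin Cov].
Proof.
rewrite !inE => /orP [vC|/orP [vs|/eqP ->]]; [by constructor 2|by constructor 1|].
by case: (boolP (z \in Cov)) => zC; [constructor 2|constructor 3].
Qed.

Lemma chain_cov_sub : chain_cov \subset Cs.
Proof.
apply/subsetP => v /chain_covP [/chain_new_in [] //|vC|[-> _]].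
  exact: (subsetP (bf_sub forest)).
exact: ac_end chain.
Qed.

Lemma chain_out v : v \notin chain_cov -> chain_par v = v /\ chain_blk v = v.
Proof.
rewrite !inE !negb_or => /and3P [vC vs _].
by have [-> -> _] := notin_chain vs; apply: (bf_out forest).
Qed.

Lemma chain_par_in : {in chain_cov, forall v, chain_par v \in chain_cov}.
Proof.
move=> v /chain_covP [vs|vC|[-> zC]].
- rewrite /chain_par vs !inE; have [lt|ge] := ltnP (index v s).+1 (size s).
    by rewrite mem_nth ?orbT.
  by rewrite nth_default ?eqxx ?orbT.
- have [-> _ _] := notin_chain (cov_notin_chain vC).
  by rewrite inE (bf_par forest).
- by have [-> _ _] := notin_chain z_notin_s; have [->] := bf_out forest zC; rewrite !inE eqxx !orbT.
Qed.

Lemma chain_rank_dec x : chain_par x != x -> chain_rank (chain_par x) < chain_rank x.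
Proof.
have [xs _|xs] := boolP (x \in s).
  have ix : index x s < size s by rewrite index_mem.
  rewrite /chain_par xs {2}/chain_rank xs.
  have [lt|ge] := ltnP (index x s).+1 (size s).
    by rewrite /chain_rank mem_nth // index_uniq // ltn_add2l; apply: ltn_sub2l.
  rewrite nth_default //; have [_ _ ->] := notin_chain z_notin_s.
  by rewrite -[X in X < _]addn0 ltn_add2l subn_gt0.
have [-> _ ->] := notin_chain xs => px.
have xC : x \in Cov by apply: contraNT px => /(bf_out forest) [->]; rewrite eqxx.
have [_ _ ->] := notin_chain (cov_notin_chain (bf_par forest xC)).
exact: (bf_rank forest).
Qed.

Lemma chain_anc : {in chain_cov, forall v, fconnect chain_par v (chain_blk v)}.
Proof.
move=> v /chain_covP [vs|vC|[-> zC]].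
- rewrite /chain_blk vs -{1}(nth_index z vs) -nth_last.
  apply: fconnect_chain; last exact: leq_pred.
  by rewrite -ltnS prednK // index_mem.
- have [_ -> _] := notin_chain (cov_notin_chain vC).
  exact: fconnect_chain_old (bf_anc forest vC).
- by have [_ -> _] := notin_chain z_notin_s; have [_ ->] := bf_out forest zC.
Qed.

Lemma chain_blk_par : {in chain_cov, forall v, v != chain_blk v ->
  chain_blk (chain_par v) = chain_blk v}.
Proof.
move=> v /chain_covP [vs|vC|[-> zC]].
- rewrite {1}/chain_blk vs => v_last.
  have lt : (index v s).+1 < size s.
    rewrite ltn_neqAle index_mem vs andbT; apply: contraNneq v_last => eq_i.
    by rewrite -nth_last -eq_i /= nth_index.
  by rewrite /chain_par vs /chain_blk mem_nth // vs.
- have [-> -> _] := notin_chain (cov_notin_chain vC) => nb.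
  have [_ -> _] := notin_chain (cov_notin_chain (bf_par forest vC)).
  exact: (bf_blk_par forest).
- by have [_ -> _] := notin_chain z_notin_s; have [_ ->] := bf_out forest zC; rewrite eqxx.
Qed.

Lemma chain_top : {in chain_cov, forall v, chain_par v != v ->
  chain_par (chain_blk v) != chain_blk v}.
Proof.
move=> v /chain_covP [vs|vC|[-> zC]].
- by move=> _; rewrite /chain_blk vs chain_par_neq // last_chain_in.
- have [-> -> _] := notin_chain (cov_notin_chain vC) => pv.
  have [-> _ _] := notin_chain (cov_notin_chain (bf_blk forest vC)).
  exact: (bf_top forest).
- by have [-> _ _] := notin_chain z_notin_s; have [-> _] := bf_out forest zC; rewrite eqxx.
Qed.

Lemma chain_nearer : {in chain_cov, forall v, chain_par v != v -> {in Cs, forall y,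
  (d v y < d v (chain_par v))%R -> chain_blk y = chain_blk v /\ fconnect chain_par y v}}.
Proof.
move=> v /chain_covP [vs|vC|[-> zC]].
- move=> _ y yCs; have iv : index v s < size s by rewrite index_mem.
  have v_nth : v = nth z s (index v s) by rewrite nth_index.
  rewrite {1 2 3}v_nth chain_par_nth // => /(ac_nn chain iv yCs) [j ji ->].
  rewrite /chain_blk mem_nth ?vs; last exact: leq_ltn_trans ji iv.
  by split => //; rewrite v_nth; apply: fconnect_chain => //; apply: ltnW.
- have [-> -> _] := notin_chain (cov_notin_chain vC) => pv y yCs lt.
  have [by_ yv] := bf_nearer forest vC pv yCs lt.
  have yC : y \in Cov.
    apply: contraT => yC; have [_ yy] := bf_out forest yC.
    by have := bf_blk forest vC; rewrite -by_ yy (negbTE yC).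
  have [_ -> _] := notin_chain (cov_notin_chain yC).
  by split => //; apply: fconnect_chain_old.
- by have [-> _ _] := notin_chain z_notin_s; have [-> _] := bf_out forest zC; rewrite eqxx.
Qed.

Lemma block_chain_last : block chain_blk (last z s) = [set x in s].
Proof.
apply/setP => w; rewrite !inE; have [ws|ws] := boolP (w \in s).
  by rewrite /chain_blk ws eqxx andbT; case: (chain_new_in ws).
have [_ -> _] := notin_chain ws; apply/negP => /andP [_ /eqP wl].
have [wC|wC] := boolP (w \in Cov).
  by move: (cov_notin_chain (bf_blk forest wC)); rewrite wl last_chain_in.
by have [_ ww] := bf_out forest wC; move: ws; rewrite -ww wl last_chain_in.
Qed.

Lemma card_block_chain_last : #|block chain_blk (last z s)| = size s.
Proof. by rewrite block_chain_last cardsE; apply/card_uniqP. Qed.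

Lemma chain_block_size a : #|block chain_blk a| <= k.
Proof.
have [->|a_last] := eqVneq a (last z s).
  by rewrite card_block_chain_last; case/andP: (ac_size chain).
apply: leq_trans (bf_block_size forest a); apply/subset_leq_card/subsetP => w.
rewrite !inE => /andP [wCs /eqP wa]; rewrite wCs /=.
have [ws|ws] := boolP (w \in s).
  by move: wa; rewrite /chain_blk ws => al; rewrite al eqxx in a_last.
by have [_ <- _] := notin_chain ws; rewrite wa.
Qed.

Lemma chain_root_block : {in chain_cov, forall r, chain_par r = r -> exists a,
  [/\ a \in chain_cov, chain_par a = r, a != r, chain_blk a = a &
      k <= #|block chain_blk a|]}.
Proof.
move=> r /chain_covP [rs|rC|[-> zC]].
- by move=> rr; have := chain_par_neq rs; rewrite rr eqxx.
- have [-> _ _] := notin_chain (cov_notin_chain rC) => pr.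
  have [a [aC pa ar ba ka]] := bf_root_block forest rC pr.
  have [pa' ba' _] := notin_chain (cov_notin_chain aC).
  exists a; split; rewrite ?inE ?aC ?pa' ?ba' //.
  apply: leq_trans ka _; apply/subset_leq_card/subsetP => w.
  rewrite !inE => /andP [wCs /eqP wa]; rewrite wCs /=.
  have [ws|ws] := boolP (w \in s); last by have [_ -> _] := notin_chain ws; rewrite wa.
  have [_ ww] := bf_out forest (proj2 (chain_new_in ws)).
  by move: aC; rewrite -wa ww => /cov_notin_chain; rewrite ws.
- move=> _; have sk : size s = k by case: (ac_stop chain); rewrite ?(negbTE zC).
  exists (last z s); split.
  + by rewrite !inE last_chain_in orbT.
  + exact: chain_par_last.
  + by apply: contraNneq z_notin_s => <-; apply: last_chain_in.
  + by rewrite /chain_blk last_chain_in.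
  + by rewrite card_block_chain_last sk.
Qed.

Lemma block_forest_chain : block_forest chain_cov chain_par chain_blk chain_rank.
Proof.
split.
- exact: chain_cov_sub.
- exact: chain_out.
- exact: chain_par_in.
- exact: chain_rank_dec.
- exact: chain_anc.
- exact: chain_blk_par.
- exact: chain_top.
- exact: chain_block_size.
- exact: chain_root_block.
- exact: chain_nearer.
Qed.

End Extend.

Lemma block_forest_empty : 0 < k -> block_forest set0 id id (fun=> 0).
Proof.
move=> k_gt0; split=> //; try by move=> v; rewrite inE.
- exact: sub0set.
- by move=> x; rewrite eqxx.
- move=> a; apply: (leq_trans _ k_gt0); rewrite -(cards1 a).
  by apply/subset_leq_card/subsetP => w; rewrite !inE => /andP [_ ->].
Qed.

Lemma exists_block_forest : 0 < k -> k < #|Cs| ->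
  exists par blk (h : T -> nat), block_forest Cs par blk h.
Proof.
move=> k_gt0 kCs.
suff grow n Cov par blk h : #|Cs :\: Cov| < n -> block_forest Cov par blk h ->
    exists par blk (h : T -> nat), block_forest Cs par blk h.
  exact: (grow _ set0 id id _ (ltnSn _) (block_forest_empty k_gt0)).
elim: n Cov par blk h => // n IH Cov par blk h lt bf.
have [CsCov|/subsetPn [y yCs yCov]] := boolP (Cs \subset Cov).
  exists par, blk, h; suff <- : Cov = Cs by [].
  by apply/eqP; rewrite eqEsubset (bf_sub bf).
have [s [z ch]] := exists_attachable_chain d yCs yCov k_gt0 kCs.
apply: IH (block_forest_chain bf ch).
suff : #|Cs :\: chain_cov Cov s z| < #|Cs :\: Cov| by lia.
apply: proper_card.
have x_in : nth z s 0 \in s by rewrite mem_nth //; case/andP: (ac_size ch).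
have [xCs xCov] := chain_new_in ch x_in.
apply/properP; split.
  by apply: setDS; apply/subsetP => x xC; rewrite inE xC.
by exists (nth z s 0); rewrite !inE ?x_in ?orbT // xCov xCs.
Qed.

End BlockForest.

Section Split.
Variables (R : realFieldType) (T : finType) (Cs : {set T}) (d : T -> T -> R) (k : nat).
Variables (par blk : T -> T) (h : T -> nat).
Hypothesis forest : block_forest Cs d k Cs par blk h.
Implicit Type S : {set T}.

Local Notation par_rank := (bf_rank forest).

Lemma blk_fixed v : v \in Cs -> par v = v -> blk v = v.
Proof. by move=> vCs pv; rewrite (fconnect_fixed pv (bf_anc forest vCs)). Qed.

Definition descendants S a := [set u in S | fconnect par u a].
Definition child_tops S z :=
  [set a in S | [&& blk a == a, par a == z & par a != a]].
Definition hanging S z := \bigcup_(a in child_tops S z) descendants S a.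

Lemma child_topsP S z a :
  reflect [/\ a \in S, blk a = a, par a = z & par a != a] (a \in child_tops S z).
Proof.
by rewrite inE; apply: (iffP and4P) => -[aS /eqP ba /eqP pa na]; split => //; apply/eqP.
Qed.

Lemma hanging_sub S z : hanging S z \subset S.
Proof. by apply/bigcupsP => a _; apply/subsetP => u /setIdP []. Qed.

Lemma rank_child_top S z a : a \in child_tops S z -> h z < h a.
Proof. by case/child_topsP=> _ _ <-; apply: par_rank. Qed.

Lemma rank_hanging S z u : u \in hanging S z -> h z < h u.
Proof.
case/bigcupP=> a /rank_child_top za /setIdP [_ ua].
exact: leq_trans za (rank_fconnect par_rank ua).
Qed.

Lemma disjoint_descendants S z a b :
  a \in child_tops S z -> b \in child_tops S z -> a != b ->
  [disjoint descendants S a & descendants S b].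
Proof.
case/child_topsP=> _ _ pa na /child_topsP [_ _ pb nb] ab.
rewrite -setI_eq0; apply/eqP/setP => u; rewrite !inE.
apply/negP => /andP [/andP [_ ua] /andP [_ ub]].
have ha := par_rank na; have hb := par_rank nb.
have ba : b != a by rewrite eq_sym.
case: (fconnect_total ua ub) => [/fconnect_par/(_ ab)|/fconnect_par/(_ ba)].
  by move/(rank_fconnect par_rank); rewrite pa -pb; lia.
by move/(rank_fconnect par_rank); rewrite pb -pa; lia.
Qed.

Lemma card_hanging S z :
  #|hanging S z| = \sum_(a in child_tops S z) #|descendants S a|.
Proof. by apply: card_bigcup_disjoint => a b az bz; apply: disjoint_descendants az bz. Qed.

Record remainder S : Prop := Remainder {
  rem_sub : S \subset Cs;
  rem_par : {in S, forall v, par v \in S};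
  rem_block : {in S, forall v, {in Cs, forall w, blk w = blk v -> w \in S}};
  rem_root : {in S, forall r, par r = r -> exists a,
    [/\ a \in S, par a = r, a != r, blk a = a & k <= #|block Cs blk a|]} }.

Section Step.
Variables (S : {set T}) (z : T).
Hypotheses (rem : remainder S) (zS : z \in S).

Lemma descendants_decomp a u : a \in S -> blk a = a -> u \in descendants S a ->
  exists2 w, w \in block Cs blk a & u \in w |: hanging S w.
Proof.
move=> aS ba /setIdP [uS /fconnect_iterP [n]].
have inCs x : x \in S -> x \in Cs by apply: (subsetP (rem_sub rem)).
have inB x : x \in S -> blk x = a -> x \in block Cs blk a.
  by move=> xS bx; rewrite inE inCs // bx eqxx.
elim: n u uS => [|n IH] u uS /=.
  by move=> ua; exists u; rewrite ?setU11 // inB // ua.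
rewrite -iterS iterSr => /(IH _ (rem_par rem uS)) [w wB].
have /setIdP [wCs /eqP bw] := wB.
case/setU1P=> [pw|/bigcupP [b bt /setIdP [_ pb]]].
  have [bu|bu] := eqVneq (blk u) a; first by exists u; rewrite ?setU11 ?inB.
  have ub : u = blk u.
    by apply: contraNeq bu => /(bf_blk_par forest (inCs _ uS)) <-; rewrite pw bw.
  have pu : par u != u by apply: contraNneq bu => pu; rewrite -pu pw bw.
  exists w => //; apply/setU1P; right.
  apply/bigcupP; exists u; last by rewrite inE uS connect0.
  by apply/child_topsP; split; rewrite -?ub.
exists w => //; apply/setU1P; right; apply/bigcupP; exists b => //.
by rewrite inE uS (connect_trans (fconnect1 par u) pb).
Qed.

Lemma card_descendants_top :
  {in S, forall y, k <= #|hanging S y| -> h y <= h z} ->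
  {in child_tops S z, forall a, #|descendants S a| <= k ^ 2}.
Proof.
move=> zmax a az; have /child_topsP [aS ba pa na] := az.
have sub : descendants S a \subset \bigcup_(w in block Cs blk a) (w |: hanging S w).
  apply/subsetP => u ua; have [w wB uw] := descendants_decomp aS ba ua.
  by apply/bigcupP; exists w.
(* By the maximality of [z], no vertex of a child block carries [k] hanging points. *)
have small w : w \in block Cs blk a -> #|w |: hanging S w| <= k.
  case/setIdP=> wCs /eqP bw; have wS : w \in S by apply: (rem_block rem aS wCs); rewrite ba.
  have hw : h z < h w.
    apply: leq_trans (rank_child_top az) _; rewrite -{1}bw.
    exact: (rank_fconnect par_rank (bf_anc forest wCs)).
  have : #|hanging S w| < k by rewrite ltnNge; apply: contraTN hw => /(zmax w wS); lia.
  by rewrite cardsU1; have := leq_b1 (w \notin hanging S w); lia.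
apply: leq_trans (subset_leq_card sub) _.
apply: (leq_trans (card_bigcup_le _ _)).
apply: (@leq_trans (\sum_(w in block Cs blk a) k)); first exact: leq_sum.
by rewrite sum_nat_const -mulnn leq_mul2r (bf_block_size forest) orbT.
Qed.

Definition hanging_piece (G : {set T}) : T * {set T} :=
  (z, z |: \bigcup_(a in G) descendants S a).

Lemma hanging_piece_sub (G : {set T}) : G \subset child_tops S z ->
  \bigcup_(a in G) descendants S a \subset hanging S z.
Proof. by move=> Gz; apply/bigcupsP => a aG; apply: bigcup_sup; apply: (subsetP Gz). Qed.

Lemma card_hanging_piece (G : {set T}) : G \subset child_tops S z ->
  #|(hanging_piece G).2| = (\sum_(a in G) #|descendants S a|).+1.
Proof.
move=> Gz; rewrite /= cardsU1 card_bigcup_disjoint; last first.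
  by move=> a b aG bG; apply: disjoint_descendants; apply: (subsetP Gz).
suff -> : z \notin \bigcup_(a in G) descendants S a by [].
by apply/negP => /(subsetP (hanging_piece_sub Gz)) /rank_hanging; rewrite ltnn.
Qed.

Lemma admissible_hanging_piece (G : {set T}) : G \subset child_tops S z ->
  admissible_piece Cs par blk (hanging_piece G).1 (hanging_piece G).2.
Proof.
move=> Gz; split => /=.
- exact: setU11.
- apply/subsetP => x /setU1P [->|/bigcupP [a _ /setIdP [xS _]]];
    exact: (subsetP (rem_sub rem)).
- move=> v /setU1P [->|]; first by rewrite eqxx.
  move=> /bigcupP [a aG /setIdP [vS va]] _.
  have /child_topsP [aS ba pa na] := subsetP Gz _ aG.
  have [->|nva] := eqVneq v a; first by rewrite pa setU11 -pa.
  split.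
    apply/setU1P; right; apply/bigcupP; exists a => //.
    by rewrite inE (rem_par rem vS) (fconnect_par va nva).
  by apply: contra_neq nva => pv; rewrite (fconnect_fixed pv va).
- move=> v /setU1P [->|]; first by rewrite eqxx.
  move=> /bigcupP [a aG /setIdP [vS va]] _ w wCs bw wv.
  apply/setU1P; right; apply/bigcupP; exists a => //.
  by rewrite inE (rem_block rem vS wCs bw) (connect_trans wv va).
Qed.

Lemma child_top_hanging a : a \in child_tops S z -> a \in hanging S z.
Proof.
move=> az; apply/bigcupP; exists a => //.
by have /child_topsP [aS _ _ _] := az; rewrite inE aS connect0.
Qed.

Lemma mem_hanging_par u : u \in S -> par u \in hanging S z -> u \in hanging S z.
Proof.
move=> uS /bigcupP [a az /setIdP [_ pa]]; apply/bigcupP; exists a => //.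
by rewrite inE uS (connect_trans (fconnect1 par u) pa).
Qed.

(* A root whose child blocks are all cut off is removed as well. *)
Definition rest := [set y in S | (y \notin hanging S z) && ~~ ((y == z) && (par z == z))].

Lemma rest_sub : rest \subset S.
Proof. by apply/subsetP => y /setIdP []. Qed.

Lemma rest_par : {in rest, forall v, par v \in rest}.
Proof.
move=> v /setIdP [vS /andP [vH vz]]; rewrite inE (rem_par rem vS) /=.
apply/andP; split; first by apply: contra vH; apply: mem_hanging_par.
apply/negP => /andP [/eqP pvz /eqP pzz].
have pvv : par v != v by apply: contraNneq vz => pv; rewrite -pv pvz pzz !eqxx.
have vCs : v \in Cs by apply: (subsetP (rem_sub rem)).
have [vb|nvb] := eqVneq v (blk v).
  move: vH; rewrite child_top_hanging //; apply/child_topsP; split => //; exact/esym.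
have := bf_blk_par forest vCs nvb; rewrite pvz blk_fixed ?(subsetP (rem_sub rem)) // => bz.
by have := bf_top forest vCs pvv; rewrite -bz pzz eqxx.
Qed.

Lemma fconnect_blk w a : w \in Cs -> blk a = a -> fconnect par w a -> fconnect par (blk w) a.
Proof.
move=> wCs ba /fconnect_iterP [n]; elim: n w wCs => [|n IH] w wCs /=.
  by move=> ->; rewrite ba connect0.
rewrite -iterS iterSr => wa; have [<-|nw] := eqVneq w (blk w).
  by apply/fconnect_iterP; exists n.+1; rewrite iterSr.
by rewrite -(bf_blk_par forest wCs nw); apply: IH wa; apply: (bf_par forest).
Qed.

Lemma rest_block : {in rest, forall v, {in Cs, forall w, blk w = blk v -> w \in rest}}.
Proof.
move=> v /setIdP [vS /andP [vH vz]] w wCs bw.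
have vCs : v \in Cs by apply: (subsetP (rem_sub rem)).
rewrite inE (rem_block rem vS wCs bw) /=; apply/andP; split.
  apply/negP => /bigcupP [a az /setIdP [_ wa]]; have /child_topsP [_ ba _ _] := az.
  move: vH; apply/negP; rewrite negbK; apply/bigcupP; exists a => //.
  rewrite inE vS (connect_trans (bf_anc forest vCs)) // -bw.
  exact: fconnect_blk.
apply/negP => /andP [/eqP wz /eqP pzz].
move: bw; rewrite wz blk_fixed ?(subsetP (rem_sub rem)) // => bz.
have [pv|pv] := eqVneq (par v) v.
  by move: vz; rewrite -(blk_fixed vCs pv) -bz pzz !eqxx.
by have := bf_top forest vCs pv; rewrite -bz pzz eqxx.
Qed.

Lemma rest_root : {in rest, forall r, par r = r -> exists a,
  [/\ a \in rest, par a = r, a != r, blk a = a & k <= #|block Cs blk a|]}.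
Proof.
move=> r /setIdP [rS /andP [rH rz]] pr.
have [a [aS pa ar ba ka]] := rem_root rem rS pr.
exists a; split => //; rewrite inE aS /=; apply/andP; split.
  apply/negP => /bigcupP [b /child_topsP [_ _ pb nb] /setIdP [_ ab]].
  have [eab|nab] := eqVneq a b.
    have rz' : r = z by rewrite -pa eab pb.
    by move: rz; rewrite -rz' pr !eqxx.
  have := fconnect_par ab nab; rewrite pa => /(fconnect_fixed pr) br.
  by move: nb; rewrite br pr eqxx.
by apply/negP => /andP [/eqP az /eqP pzz]; move: ar; rewrite -pa az pzz eqxx.
Qed.

Lemma remainder_rest : remainder rest.
Proof.
split; [|exact: rest_par|exact: rest_block|exact: rest_root].
exact: subset_trans rest_sub (rem_sub rem).
Qed.

Lemma hanging_piece_nonroot (G : {set T}) :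
  (hanging_piece G).2 :\ (hanging_piece G).1 \subset \bigcup_(a in G) descendants S a.
Proof. by apply/subsetP => u /setD1P [uz /setU1P [uz'|//]]; rewrite uz' eqxx in uz. Qed.

Lemma exists_hanging_pieces : 0 < k ->
  {in S, forall y, k <= #|hanging S y| -> h y <= h z} -> k <= #|hanging S z| ->
  exists NP : {set T * {set T}},
    [/\ {in NP, forall p, admissible_piece Cs par blk p.1 p.2 /\ k.+1 <= #|p.2| <= k.+1 ^ 2},
        {in NP, forall p, p.2 :\ p.1 \subset hanging S z},
        {in z |: hanging S z, forall x, exists2 p, p \in NP & x \in p.2} &
        {in NP &, forall p p', p != p' -> [disjoint p.2 :\ p.1 & p'.2 :\ p'.1]}].
Proof.
move=> k_gt0 zmax zbig.
have [|P Ppart Pw] := @exists_partition_weight _ (fun a => #|descendants S a|) _ (k ^ 2)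
  k_gt0 (child_tops S z) (card_descendants_top zmax); first by rewrite -card_hanging.
have Pz G : G \in P -> G \subset child_tops S z by apply: partitionS.
exists [set hanging_piece G | G in P]; split.
- move=> _ /imsetP [G GP ->]; split; first exact: admissible_hanging_piece (Pz G GP).
  rewrite card_hanging_piece ?Pz //; have := Pw G GP; rewrite -!mulnn; nia.
- move=> _ /imsetP [G GP ->]; apply: subset_trans (hanging_piece_nonroot G) _.
  exact: hanging_piece_sub (Pz G GP).
- have top_in a : a \in child_tops S z -> exists2 G, G \in P & a \in G.
    by rewrite -(cover_partition Ppart) => /bigcupP [G GP aG]; exists G.
  move=> x /setU1P [->|/bigcupP [a az xa]].
    have [u /bigcupP [a az _]] : exists u, u \in hanging S z.
      by apply/set0Pn; rewrite -card_gt0; apply: leq_trans zbig.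
    have [G GP _] := top_in a az.
    by exists (hanging_piece G); [apply: imset_f | apply: setU11].
  have [G GP aG] := top_in a az.
  exists (hanging_piece G); first exact: imset_f.
  by apply/setU1P; right; apply/bigcupP; exists a.
- move=> _ _ /imsetP [G GP ->] /imsetP [G' G'P ->] neq.
  have GG' : G != G' by apply: contraNneq neq => ->.
  apply: disjointW (hanging_piece_nonroot G) (hanging_piece_nonroot G') _.
  apply/bigcup_disjointP => b bG'; rewrite disjoint_sym.
  apply/bigcup_disjointP => a aG.
  apply: disjoint_descendants (subsetP (Pz G' G'P) _ bG') (subsetP (Pz G GP) _ aG) _.
  apply: contraTneq bG' => ->.
  have /trivIsetP tiP := partition_trivIset Ppart.
  by rewrite (disjointFr (tiP _ _ GP G'P GG') aG).
Qed.

End Step.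

Definition pieces_outside S (Pcs : {set T * {set T}}) : Prop :=
  [/\ {in Pcs, forall p, admissible_piece Cs par blk p.1 p.2 /\ k.+1 <= #|p.2| <= k.+1 ^ 2},
      {in Cs :\: S, forall x, exists2 p, p \in Pcs & x \in p.2},
      {in Pcs &, forall p p', p != p' -> [disjoint p.2 :\ p.1 & p'.2 :\ p'.1]} &
      {in Pcs, forall p, [disjoint p.2 :\ p.1 & S]}].

Lemma mem_rest_cover S z x : x \in S -> x \notin rest S z -> x \in z |: hanging S z.
Proof.
move=> xS; have [xH _|xH] := boolP (x \in hanging S z); first by rewrite setU1r.
by rewrite inE xS xH /= negbK => /andP [/eqP -> _]; apply: setU11.
Qed.

Lemma disjoint_hanging_rest S z : [disjoint hanging S z & rest S z].
Proof.
by rewrite disjoints_subset; apply/subsetP => u uH; rewrite !inE uH /= andbF.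
Qed.

Lemma pieces_outside_rest S z Pcs (NP : {set T * {set T}}) : pieces_outside S Pcs ->
  {in NP, forall p, admissible_piece Cs par blk p.1 p.2 /\ k.+1 <= #|p.2| <= k.+1 ^ 2} ->
  {in NP, forall p, p.2 :\ p.1 \subset hanging S z} ->
  {in z |: hanging S z, forall x, exists2 p, p \in NP & x \in p.2} ->
  {in NP &, forall p p', p != p' -> [disjoint p.2 :\ p.1 & p'.2 :\ p'.1]} ->
  pieces_outside (rest S z) (Pcs :|: NP).
Proof.
move=> [Pgood Pcov Pdis PS] NPgood NPsub NPcov NPdis.
have old_new p p' : p \in Pcs -> p' \in NP -> [disjoint p.2 :\ p.1 & p'.2 :\ p'.1].
  move=> pP p'N; rewrite disjoint_sym.
  apply: disjointWl (subset_trans (NPsub _ p'N) (hanging_sub S z)) _.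
  by rewrite disjoint_sym; apply: PS.
split.
- by move=> p /setUP [/Pgood|/NPgood].
- move=> x /setDP [xCs xS'].
  have [xS|xS] := boolP (x \in S); last first.
    have xCS : x \in Cs :\: S by rewrite inE xS xCs.
    by have [p pP xp] := Pcov x xCS; exists p; rewrite ?inE ?pP.
  by have [p pN xp] := NPcov x (mem_rest_cover xS xS'); exists p; rewrite ?inE ?pN ?orbT.
- move=> p p' /setUP [pP|pN] /setUP [p'P|p'N] neq.
  + exact: Pdis.
  + exact: old_new.
  + by rewrite disjoint_sym; apply: old_new.
  + exact: NPdis.
- move=> p /setUP [pP|pN]; first exact: disjointWr (rest_sub S z) (PS p pP).
  exact: disjointWl (NPsub p pN) (disjoint_hanging_rest S z).
Qed.

Lemma root_hanging_big S r : remainder S -> r \in S -> par r = r -> k <= #|hanging S r|.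
Proof.
move=> rem rS pr; have [a [aS pa ar ba ka]] := rem_root rem rS pr.
apply: leq_trans ka _; apply/subset_leq_card/subsetP => w /setIdP [wCs /eqP bw].
apply/bigcupP; exists a; first by apply/child_topsP; rewrite pa eq_sym.
have wS : w \in S by apply: (rem_block rem aS wCs); rewrite bw ba.
by rewrite inE wS -bw (bf_anc forest wCs).
Qed.

Lemma card_rest_lt S z : 0 < #|hanging S z| -> #|rest S z| < #|S|.
Proof.
rewrite card_gt0 => /set0Pn [u uH]; apply: proper_card; apply/properP.
split; first exact: rest_sub.
exists u; first exact: (subsetP (hanging_sub S z)).
by rewrite (disjointFr (disjoint_hanging_rest S z) uH).
Qed.

Lemma remainder_step S Pcs : 0 < k -> remainder S -> pieces_outside S Pcs -> S != set0 ->
  exists S' Pcs', [/\ remainder S', pieces_outside S' Pcs' & #|S'| < #|S|].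
Proof.
move=> k_gt0 rem Pout /set0Pn [x xS].
have [r rS pr] := exists_fixed_in par_rank (rem_par rem) xS.
pose C := [set y in S | k <= #|hanging S y|].
have rC : r \in C by rewrite inE rS root_hanging_big.
have [z zC zmax] : exists2 z, z \in C & {in C, forall y, h y <= h z}.
  by exists [arg max_(y > r in C) h y]; case: arg_maxnP.
have /setIdP [zS zbig] := zC.
have zmax' : {in S, forall y, k <= #|hanging S y| -> h y <= h z}.
  by move=> y yS yb; apply: zmax; rewrite inE yS.
have [NP [NPgood NPsub NPcov NPdis]] := exists_hanging_pieces rem zS k_gt0 zmax' zbig.
exists (rest S z), (Pcs :|: NP); split.
- exact: remainder_rest.
- exact: pieces_outside_rest.
- by apply: card_rest_lt; apply: leq_trans zbig.
Qed.

Lemma exists_piece_cover : 0 < k -> exists Pcs, piece_cover Cs par blk k.+1 Pcs.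
Proof.
move=> k_gt0.
have rem0 : remainder Cs.
  by split; [exact: subxx | exact: bf_par forest | move=> v _ w | exact: bf_root_block forest].
have out0 : pieces_outside Cs set0.
  split; try by move=> p; rewrite inE.
  by move=> x; rewrite setDv inE.
suff [Pcs [_ [Pgood Pcov Pdis _]]] : exists Pcs, remainder set0 /\ pieces_outside set0 Pcs.
  by exists Pcs; split => // x xCs; apply: Pcov; rewrite setD0.
suff grow n S Pcs : #|S| < n -> remainder S -> pieces_outside S Pcs ->
    exists Pcs, remainder set0 /\ pieces_outside set0 Pcs.
  exact: grow _ _ _ (ltnSn _) rem0 out0.
elim: n S Pcs => // n IH S Pcs lt rem out.
have [S0|Sne] := eqVneq S set0; first by exists Pcs; rewrite -S0.
have [S' [Pcs' [rem' out' lt']]] := remainder_step k_gt0 rem out Sne.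
by apply: IH rem' out'; lia.
Qed.

End Split.

Lemma singleton_piece_cover (T : finType) (Cs : {set T}) :
  piece_cover Cs id id 1 [set (v, [set v]) | v in Cs].
Proof.
split.
- move=> _ /imsetP [v vCs ->]; rewrite cards1; split => //.
  split => //=; [exact: set11 | by rewrite sub1set | by move=> w /set1P ->; rewrite eqxx..].
- by move=> v vCs; exists (v, [set v]); [apply: imset_f | apply: set11].
- by move=> _ p' /imsetP [v _ ->] _ _; rewrite /= setDv -setI_eq0 set0I.
Qed.

Local Open Scope ring_scope.

Theorem lemma4 (R : realFieldType) (T : finType) (F C : {set T})
  (d : T -> T -> R) (x : T -> T -> R) (l0 : nat) :
  (0 < l0)%N ->
  metric_on (F :|: C) d ->
  (forall i j, i \in F -> j \in C -> 0 <= x i j) ->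
  (forall j, j \in C -> \sum_(i in F) x i j = 1) ->
  forall Cs : {set T}, greedy_reps F x d l0 C Cs ->
  forall l : nat, (0 < l)%N -> (l <= #|Cs|)%N ->
  exists TT : {set rtree T},
    (forall t, t \in TT -> neighborhood_tree Cs d t) /\
    (forall t, t \in TT -> (l <= #|rt_V t| <= l ^ 2)%N) /\
    \bigcup_(t in TT) rt_V t = Cs /\
    (forall t t', t \in TT -> t' \in TT -> t != t' ->
       [disjoint (rt_V t :\ rt_r t) & (rt_V t' :\ rt_r t')]).
Proof.
move=> _ _ _ _ Cs _ [//|[_ _|k _ lCs]].
  apply: (@neighborhood_trees_of_pieces _ _ Cs d id id (fun=> 0%N)).
  - by move=> v; rewrite eqxx.
  - by move=> v _; rewrite eqxx.
  - exact: singleton_piece_cover.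
have [par [blk [h forest]]] := exists_block_forest d (ltn0Sn k) lCs.
have [Pcs cover] := exists_piece_cover forest (ltn0Sn k).
exact: (neighborhood_trees_of_pieces (bf_rank forest) (bf_nearer forest) cover).
Qed.
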